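(* Let $r\ge 3$ and $n\ge 2r$, and let $M$ be a matroid of rank $r$ on a linearly ordered set $E$ with $|E|=n$. Then \[ \sum_{k=0}^{r-1}|\mathcal V_k|\,c_k\le 1,\qquad\text{where } c_{r-1}=\frac{r}{\binom{n}{r-1}},\quad c_0=\frac1n,\quad c_k=\frac{k}{\binom nk}\ (0<k<r-1). \]
   Context: Graded lexicographic order on $2^E$: $X\prec Y$ if $|X|<|Y|$, or $|X|=|Y|$ and $\min(X\triangle Y)\in X$; $\min\mathcal X$ is the $\prec$-smallest member. $X$ is $k$-closed in $M$ if $\mathrm{cl}_M(Y)\subseteq X$ for all $Y\subseteq X$ with $|Y|\le k$; $\mathrm{cl}_k(X)$ is the intersection of all $k$-closed supersets of $X$ (so $\mathrm{cl}_{-1}(X)=X$). For a flat $F$ of rank $k$, $U^*_F=\min\{U:\mathrm{cl}_{k-1}(U)=F\}$; $\mathcal U^*_k=\{U^*_F: F\text{ a flat of rank }k,\ |U^*_F|>k\}$. $V\subseteq U$ is consecutive in $U$ if there are no $e,g\in V$, $f\in U\setminus V$ with $e<f<g$. For $U\in\mathcal U^*_k$, $\mathcal V(U)$ is the set of consecutive $(k+1)$-subsets of $U$, and $\mathcal V_k=\bigcup_{U\in\mathcal U^*_k}\mathcal V(U)$. *)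

From mathcomp Require Import all_boot all_order all_algebra ssrint rat.
Set Implicit Arguments. Unset Strict Implicit. Unset Printing Implicit Defensive.
Import Order.TTheory GRing.Theory Num.Theory.

(* Ground set E = 'I_n, linearly ordered by the natural order on indices. *)

Record matroid (n : nat) := Matroid {
  indep : {set 'I_n} -> bool;
  indep0 : indep set0;
  indep_sub : forall X Y : {set 'I_n}, Y \subset X -> indep X -> indep Y;
  indep_aug : forall X Y : {set 'I_n}, indep X -> indep Y -> #|X| < #|Y| ->
     exists2 e, e \in Y :\: X & indep (e |: X)
}.

Section MatroidDefs.
Variables (n : nat) (M : matroid n).

Definition mrank (X : {set 'I_n}) : nat :=
  \max_(Y : {set 'I_n} | (Y \subset X) && indep M Y) #|Y|.

Definition mcl (X : {set 'I_n}) : {set 'I_n} :=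
  [set e | mrank (e |: X) == mrank X].

Definition flat (F : {set 'I_n}) : bool := mcl F == F.

(* X is k-closed (k an integer, possibly -1) *)
Definition kclosed (k : int) (X : {set 'I_n}) : bool :=
  [forall Y : {set 'I_n}, ((Y \subset X) && (#|Y|%:Z <= k)%R) ==> (mcl Y \subset X)].

Definition clk (k : int) (X : {set 'I_n}) : {set 'I_n} :=
  \bigcap_(Z : {set 'I_n} | kclosed k Z && (X \subset Z)) Z.

Definition glex_lt (X Y : {set 'I_n}) : bool :=
  (#|X| < #|Y|) ||
  ((#|X| == #|Y|) &&
   [exists e : 'I_n, (e \in X) && (e \notin Y) &&
      [forall f : 'I_n, (f < e)%N ==> ((f \in X) == (f \in Y))]]).

Definition is_Ustar (F U : {set 'I_n}) : bool :=
  let k := ((mrank F)%:Z)%R in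
  (clk (k - 1)%R U == F) &&
  [forall U' : {set 'I_n}, ((clk (k - 1)%R U' == F) && (U' != U)) ==> glex_lt U U'].

Definition Ustar_k (k : nat) : {set {set 'I_n}} :=
  [set U : {set 'I_n} | [exists F : {set 'I_n}, [&& flat F, mrank F == k & is_Ustar F U]]
                        && (k < #|U|)].

Definition consecutive (V U : {set 'I_n}) : bool :=
  (V \subset U) &&
  ~~ [exists e : 'I_n, exists f : 'I_n, exists g : 'I_n,
        [&& e \in V, g \in V, f \in U :\: V, (e < f)%N & (f < g)%N]].

Definition VofU (k : nat) (U : {set 'I_n}) : {set {set 'I_n}} :=
  [set V : {set 'I_n} | consecutive V U && (#|V| == k.+1)].

Definition V_k (k : nat) : {set {set 'I_n}} :=
  \bigcup_(U in Ustar_k k) VofU k U.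

End MatroidDefs.

Definition ck (n r k : nat) : rat :=
  if k == r.-1 then (r%:R / ('C(n, r.-1))%:R)%R
  else if k == 0 then (1 / n%:R)%R
  else (k%:R / ('C(n, k))%:R)%R.

From mathcomp Require Import all_boot all_order all_algebra ssrint rat.
From mathcomp Require Import zify.
Import Order.TTheory GRing.Theory Num.Theory.
Set Implicit Arguments. Unset Strict Implicit. Unset Printing Implicit Defensive.

(* Let U = U*_F for a flat F of rank k > 0. Minimality of U in the graded
   lexicographic order makes every subset of U of size at most k independent,
   and every k-subset X of U a basis of F.  Hence U is determined by any such X,
   and if X also lies in some U*_F' with rk F' > k, then X is an initial segment
   of U: otherwise exchanging an element of X for a smaller element of U \ X
   would make U*_F' lexicographically smaller.  So the non-initial k-subsets of
   the sets U*_F (all k-subsets when k = r - 1), together with the singleton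
   loops in V_0, form an antichain.  U has at most |U| - k consecutive
   (k+1)-subsets but at least k(|U| - k) non-initial k-subsets, and at least
   r(|U| - k) k-subsets when k = r - 1, so the LYM inequality for the antichain
   gives the claim. *)

Section Rank.
Variables (n : nat) (M : matroid n).
Implicit Types (X Y I J C : {set 'I_n}) (e u : 'I_n).

Lemma indep_leq_mrank X I : I \subset X -> indep M I -> #|I| <= mrank M X.
Proof. by move=> sIX iI; apply: (bigop.leq_bigmax_cond I); rewrite sIX. Qed.

Lemma exists_basis X : exists I, [/\ I \subset X, indep M I & #|I| = mrank M X].
Proof.
have P0 : (set0 \subset X) && indep M set0 by rewrite sub0set indep0.
rewrite /mrank (bigop.bigmax_eq_arg set0 P0).
by case: arg_maxnP => //= I /andP[sIX iI] _; exists I.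
Qed.

Lemma mrank_leq X m :
  (forall I, I \subset X -> indep M I -> #|I| <= m) -> mrank M X <= m.
Proof. by move=> H; apply/bigop.bigmax_leqP => I /andP[]; exact: H. Qed.

Lemma mrank_leq_card X : mrank M X <= #|X|.
Proof. by apply: mrank_leq => I sIX _; apply: subset_leq_card. Qed.

Lemma mrank_indep X : indep M X -> mrank M X = #|X|.
Proof. by move=> iX; apply/eqP; rewrite eqn_leq mrank_leq_card indep_leq_mrank. Qed.

Lemma mrank_mono X Y : X \subset Y -> mrank M X <= mrank M Y.
Proof.
move=> sXY; apply: mrank_leq => I sIX iI.
by apply: indep_leq_mrank iI; apply: subset_trans sXY.
Qed.

Lemma mrank_dep X : ~~ indep M X -> mrank M X < #|X|.
Proof.
move=> dX; have [I [sIX iI <-]] := exists_basis X.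
rewrite ltn_neqAle subset_leq_card // andbT.
apply: contraNneq dX => eIX; suff -> : X = I by [].
by apply/eqP; rewrite eq_sym eqEcard sIX eIX leqnn.
Qed.

Lemma indep_extend Y I : I \subset Y -> indep M I ->
  exists J, [/\ I \subset J, J \subset Y, indep M J & #|J| = mrank M Y].
Proof.
move Hd : (mrank M Y - #|I|) => d; elim: d I Hd => [|d IH] I Hd sIY iI.
  exists I; split => //; apply/eqP; rewrite eqn_leq indep_leq_mrank //=.
  by rewrite -subn_eq0 Hd.
have [K [sKY iK cK]] := exists_basis Y.
have /(indep_aug iI iK) [e /setDP[eK eI] ieI] : #|I| < #|K| by rewrite cK; lia.
have seY : e |: I \subset Y by rewrite subUset sub1set (subsetP sKY) ?sIY.
have [|J [sJ1 sJ2 iJ eJ]] := IH (e |: I) _ seY ieI; first by rewrite cardsU1 eI; lia.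
by exists J; split => //; apply: subset_trans sJ1; apply: subsetUr.
Qed.

Lemma mcl_mono X Y : X \subset Y -> mcl M X \subset mcl M Y.
Proof.
move=> sXY; apply/subsetP => e; rewrite !inE => /eqP eX.
have [I [sIX iI eI]] := exists_basis X.
have [J [sIJ sJY iJ eJ]] := indep_extend (subset_trans sIX sXY) iI.
rewrite eqn_leq [_ <= mrank M (e |: Y)]mrank_mono ?subsetUr // andbT leqNgt.
apply/negP => lt.
have [K [sKY iK eK]] := exists_basis (e |: Y).
have /(indep_aug iJ iK) [f /setDP[fK fJ] ifJ] : #|J| < #|K| by rewrite eK eJ.
have /setU1P[fe|fY] := subsetP sKY f fK; last first.
  have := indep_leq_mrank (_ : f |: J \subset Y) ifJ.
  by rewrite subUset sub1set fY sJY cardsU1 fJ eJ ltnn => /(_ isT).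
subst f; have eI' : e \notin I by apply: contra fJ; apply: (subsetP sIJ).
have := indep_leq_mrank (setUS [set e] sIX) (indep_sub (setUS [set e] sIJ) ifJ).
by rewrite cardsU1 eI' eI eX ltnn.
Qed.

Lemma dep_mem_mcl Y : ~~ indep M Y -> exists2 u, u \in Y & u \in mcl M (Y :\ u).
Proof.
move=> dY; pose P C := (C \subset Y) && ~~ indep M C.
have PY : P Y by rewrite /P subxx dY.
case: (arg_minnP (fun C => #|C|) PY) => C /andP[sCY dC] minC.
have [u uC] : exists u, u \in C.
  by apply/set0Pn; apply: contraNneq dC => ->; exact: indep0.
have cC : #|C| = #|C :\ u|.+1 by rewrite (cardsD1 u C) uC.
have iCu : indep M (C :\ u).
  apply: contraT => dCu; have := minC (C :\ u).
  by rewrite /P (subset_trans (subD1set C u)) // dCu cC ltnn => /(_ isT).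
exists u; first exact: subsetP sCY u uC.
apply: (subsetP (mcl_mono (setSD [set u] sCY))).
rewrite inE setD1K // (mrank_indep iCu) eqn_leq -ltnS -cC mrank_dep //=.
by rewrite -{1}(mrank_indep iCu) mrank_mono ?subD1set.
Qed.

End Rank.

Section KClosure.
Variables (n : nat) (M : matroid n).
Implicit Types X Y Z : {set 'I_n}.

Lemma subset_clk k X : X \subset clk M k X.
Proof. by apply/bigcapsP => Z /andP[]. Qed.

Lemma clk_min k X Z : kclosed M k Z -> X \subset Z -> clk M k X \subset Z.
Proof. by move=> kZ sXZ; apply: bigcap_inf; rewrite kZ sXZ. Qed.

Lemma kclosed_clk k X : kclosed M k (clk M k X).
Proof.
apply/forallP => Y; apply/implyP => /andP[sY hY]; apply/bigcapsP => Z /andP[kZ sXZ].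
move/forallP: (kZ) => /(_ Y) /implyP; apply.
by rewrite hY andbT (subset_trans sY) // clk_min.
Qed.

Lemma clk_mono k X Y : X \subset Y -> clk M k X \subset clk M k Y.
Proof.
move=> sXY; apply: clk_min (kclosed_clk _ _) _.
exact: subset_trans sXY (subset_clk _ _).
Qed.

Lemma clk_idem k X : clk M k (clk M k X) = clk M k X.
Proof.
by apply/eqP; rewrite eqEsubset subset_clk andbT clk_min ?kclosed_clk.
Qed.

Lemma clk_eq k X Y : X \subset clk M k Y -> Y \subset clk M k X -> clk M k X = clk M k Y.
Proof.
have sub (A B : {set 'I_n}) : A \subset clk M k B -> clk M k A \subset clk M k B.
  by move=> sAB; apply: subset_trans (clk_mono k sAB) _; rewrite clk_idem.
by move=> sXY sYX; apply/eqP; rewrite eqEsubset !sub.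
Qed.

Lemma mcl_sub_clk (m : nat) X Y :
  Y \subset clk M (m%:Z - 1) X -> #|Y| < m -> mcl M Y \subset clk M (m%:Z - 1) X.
Proof.
move=> sY ltYm; move/forallP: (kclosed_clk (m%:Z - 1) X) => /(_ Y) /implyP; apply.
by rewrite sY lerBrDr -PoszD lez_nat addn1.
Qed.

End KClosure.

Section GradedLex.
Variable n : nat.
Implicit Types X Y : {set 'I_n}.

Lemma glex_lt_card X Y : glex_lt X Y -> #|X| <= #|Y|.
Proof. by case/orP => [/ltnW //| /andP[/eqP -> _]]. Qed.

Lemma glex_lt_asym X Y : glex_lt X Y -> glex_lt Y X -> False.
Proof.
move=> XY YX; have /eqP eXY : #|X| == #|Y|.
  by rewrite eqn_leq !glex_lt_card.
move: XY YX; rewrite /glex_lt eXY ltnn eqxx /=.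
move=> /existsP[e /andP[/andP[eX eY] He]] /existsP[e' /andP[/andP[eY' eX'] He']].
have [lt|lt|/val_inj eq] := ltngtP e e'.
- by move/forallP: He' => /(_ e) /implyP /(_ lt); rewrite eX (negbTE eY).
- by move/forallP: He => /(_ e') /implyP /(_ lt); rewrite eY' (negbTE eX').
- by subst e'; rewrite eX in eX'.
Qed.

Lemma glex_lt_exchange X (x w : 'I_n) :
  x \in X -> (w < x)%N -> glex_lt (w |: (X :\ x)) X.
Proof.
move=> xX wx; have wx' : w != x by apply: contraTneq wx => ->; rewrite ltnn.
have cXx : #|X| = #|X :\ x|.+1 by rewrite (cardsD1 x X) xX.
apply/orP; case wX: (w \in X).
  by left; rewrite cXx ltnS cardsU1 !inE wx' wX.
right; rewrite cardsU1 !inE wX andbF cXx eqxx /=.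
apply/existsP; exists w; rewrite !inE eqxx wX /=.
apply/forallP => f; apply/implyP => fw.
have fx : f != x by apply: contraTneq (ltn_trans fw wx) => ->; rewrite ltnn.
rewrite !inE fx; suff -> : (f == w) = false by [].
by apply: contraTF fw => /eqP ->; rewrite ltnn.
Qed.

End GradedLex.

Definition initial n (U X : {set 'I_n}) : bool :=
  [forall x in X, forall w in U, (w < x)%N ==> (w \in X)].

Section Ustar.
Variables (n : nat) (M : matroid n).
Implicit Types F U X Y : {set 'I_n}.
Local Notation rk := (mrank M).

Lemma Ustar_clk F U : is_Ustar M F U -> clk M ((rk F)%:Z - 1) U = F.
Proof. by case/andP => /eqP. Qed.

Lemma Ustar_sub F U : is_Ustar M F U -> U \subset F.
Proof. by move=> hU; rewrite -(Ustar_clk hU) subset_clk. Qed.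

Lemma Ustar_glex_lt F U U' :
  is_Ustar M F U -> clk M ((rk F)%:Z - 1) U' = F -> U' != U -> glex_lt U U'.
Proof. by case/andP => _ /forallP /(_ U') /implyP H eU' ne; apply: H; rewrite eU' eqxx ne. Qed.

Lemma Ustar_glex_min F U U' :
  is_Ustar M F U -> clk M ((rk F)%:Z - 1) U' = F -> ~~ glex_lt U' U.
Proof.
move=> hU eU'; apply/negP; case: (eqVneq U' U) => [-> ltU|ne ltU].
  exact: (glex_lt_asym ltU ltU).
exact: glex_lt_asym ltU (Ustar_glex_lt hU eU' ne).
Qed.

(* A dependent small subset of U*_F would let one element of U*_F be dropped. *)
Lemma Ustar_indep F U Y : is_Ustar M F U -> Y \subset U -> #|Y| <= rk F -> indep M Y.
Proof.
move=> hU sYU cY; apply: contraT => /dep_mem_mcl [u uY umcl].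
have uU := subsetP sYU u uY.
have sYuU : Y :\ u \subset clk M ((rk F)%:Z - 1) (U :\ u).
  exact: subset_trans (setSD _ sYU) (subset_clk M _ _).
have ltYu : #|Y :\ u| < rk F by apply: leq_trans cY; rewrite (cardsD1 u Y) uY.
have : clk M ((rk F)%:Z - 1) (U :\ u) = F.
  rewrite -[RHS](Ustar_clk hU); apply: clk_eq.
    exact: subset_trans (subD1set U u) (subset_clk M _ _).
  apply/subsetP => y yU; have [->|yu] := eqVneq y u.
    exact: (subsetP (mcl_sub_clk sYuU ltYu)).
  by apply: (subsetP (subset_clk M _ _)); rewrite !inE yu.
by move/(Ustar_glex_min hU); rewrite /glex_lt [#|U|](cardsD1 u U) uU ltnSn.
Qed.

Lemma Ustar0_indep F U X : is_Ustar M F U -> rk F = 0 -> X \subset U -> indep M X -> X = set0.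
Proof.
move=> hU rF0 sXU iX; apply/eqP; rewrite -cards_eq0 -leqn0 -rF0.
exact: indep_leq_mrank (subset_trans sXU (Ustar_sub hU)) iX.
Qed.

Lemma Ustar_sub_mcl F U X : is_Ustar M F U -> X \subset U -> #|X| = rk F -> F \subset mcl M X.
Proof.
move=> hU sXU cX; have iX : indep M X by apply: Ustar_indep hU sXU _; rewrite cX.
apply/subsetP => w wF; rewrite inE (mrank_indep iX) eqn_leq.
rewrite -{2}(mrank_indep iX) mrank_mono ?subsetUr // andbT cX mrank_mono //.
by rewrite subUset sub1set wF (subset_trans sXU) ?Ustar_sub.
Qed.

Lemma Ustar_flat_sub F F' U X : flat M F' -> is_Ustar M F U ->
  X \subset U -> #|X| = rk F -> X \subset F' -> F \subset F'.
Proof.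
move=> fF' hU sXU cX sXF'; rewrite -(eqP fF').
exact: subset_trans (Ustar_sub_mcl hU sXU cX) (mcl_mono M sXF').
Qed.

Lemma Ustar_eq F F' U U' X : flat M F -> flat M F' -> is_Ustar M F U -> is_Ustar M F' U' ->
  rk F = rk F' -> X \subset U -> X \subset U' -> #|X| = rk F -> U = U'.
Proof.
move=> fF fF' hU hU' eF sXU sXU' cX.
have sFF' : F \subset F' by apply: Ustar_flat_sub fF' hU sXU cX (subset_trans sXU' (Ustar_sub hU')).
have sF'F : F' \subset F.
  by apply: Ustar_flat_sub fF hU' sXU' _ (subset_trans sXU (Ustar_sub hU)); rewrite -eF.
have eFF : F' = F by apply/eqP; rewrite eqEsubset sF'F sFF'.
subst F'; apply: contraTeq (Ustar_glex_min hU' (Ustar_clk hU)) => ne.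
by rewrite negbK (Ustar_glex_lt hU (Ustar_clk hU')) // eq_sym.
Qed.

Lemma Ustar_initial F F' U U' X : is_Ustar M F U -> is_Ustar M F' U' -> rk F < rk F' ->
  X \subset U -> #|X| = rk F -> X \subset U' -> initial U X.
Proof.
move=> hU hU' ltFF' sXU cX sXU'.
apply/forallP => x; apply/implyP => xX; apply/forallP => w; apply/implyP => wU.
apply/implyP => wx; apply: contraT => wX.
have xU' := subsetP sXU' x xX.
set k' := ((rk F')%:Z - 1)%R; have cF' : clk M k' U' = F' := Ustar_clk hU'.
pose U'' := w |: (U' :\ x).
have wF' : w \in F'.
  have sXcl : X \subset clk M k' U' := subset_trans sXU' (subset_clk M _ _).
  have ltX : #|X| < rk F' by rewrite cX.
  rewrite -cF'; apply: (subsetP (mcl_sub_clk sXcl ltX)).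
  exact: subsetP (Ustar_sub_mcl hU sXU cX) w (subsetP (Ustar_sub hU) w wU).
have xU'' : x \in clk M k' U''.
  pose X' := w |: (X :\ x).
  have sX'U : X' \subset U by rewrite subUset sub1set wU (subset_trans (subD1set X x)).
  have cX' : #|X'| = rk F by rewrite cardsU1 !inE negb_and wX orbT -cX (cardsD1 x X) xX.
  have sX'cl : X' \subset clk M k' U''.
    by apply: subset_trans (subset_clk M _ _); rewrite setUS // setSD.
  have ltX' : #|X'| < rk F' by rewrite cX'.
  apply: (subsetP (mcl_sub_clk sX'cl ltX')).
  exact: subsetP (Ustar_sub_mcl hU sX'U cX') x (subsetP (Ustar_sub hU) x (subsetP sXU x xX)).
have : clk M k' U'' = F'.
  rewrite -cF'; apply: clk_eq.
    by rewrite cF' subUset sub1set wF' (subset_trans (subD1set U' x)) ?(Ustar_sub hU').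
  apply/subsetP => y yU'; have [->|yx] := eqVneq y x; first exact: xU''.
  by apply: (subsetP (subset_clk M _ _)); rewrite !inE yx yU' orbT.
by move/(Ustar_glex_min hU'); rewrite glex_lt_exchange.
Qed.

End Ustar.

Section ConsecutiveSubsets.
Variable n : nat.
Implicit Types U V X Y : {set 'I_n}.

Lemma consecutive_setD1 V U u : consecutive V U -> u \notin V -> consecutive V (U :\ u).
Proof.
case/andP => sVU nc uV; apply/andP; split.
  by apply/subsetP => y yV; rewrite !inE (subsetP sVU) // andbT; apply: contraNneq uV => <-.
apply: contra nc => /existsP[e /existsP[f /existsP[g /and5P[eV gV fU ef fg]]]].
apply/existsP; exists e; apply/existsP; exists f; apply/existsP; exists g.
by move: fU; rewrite !inE => /andP[-> /andP[_ ->]]; rewrite eV gV ef fg.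
Qed.

Lemma consecutive_top V U u e g : consecutive V U -> u \in V ->
  (forall y, y \in U -> (y <= u)%N) -> e \in U -> e \notin V -> g \in V -> (e < g)%N.
Proof.
case/andP => sVU nc uV umax eU eV gV.
have eu : (e < u)%N.
  by rewrite ltn_neqAle umax // andbT; apply: contraNneq eV => /val_inj ->.
rewrite ltnNge leq_eqVlt negb_or; apply/andP; split.
  by apply: contraNneq eV => /val_inj <-.
apply/negP => ge; move: nc; apply/negP/negPn.
apply/existsP; exists g; apply/existsP; exists e; apply/existsP; exists u.
by rewrite gV uV !inE eV eU ge eu.
Qed.

Lemma consecutive_top_uniq V V' U u : consecutive V U -> consecutive V' U -> #|V| = #|V'| ->
  u \in V -> u \in V' -> (forall y, y \in U -> (y <= u)%N) -> V = V'.
Proof.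
move=> cV cV' eVV' uV uV' umax; apply/eqP; rewrite eqEcard eVV' leqnn andbT.
apply/subsetP => g gV; apply: contraT => gV'.
have [e eV' eV] : exists2 e, e \in V' & e \notin V.
  apply/subsetPn; apply: contra gV' => sV'V.
  suff -> : V' = V by [].
  by apply/eqP; rewrite eqEcard sV'V eVV' leqnn.
have sU W : consecutive W U -> W \subset U by case/andP.
have := consecutive_top cV' uV' umax (subsetP (sU _ cV) g gV) gV' eV'.
by move/ltn_trans/(_ (consecutive_top cV uV umax (subsetP (sU _ cV') e eV') eV gV)); rewrite ltnn.
Qed.

Lemma VofU_small k U : #|U| <= k -> VofU k U = set0.
Proof.
move=> cU; apply/setP => V; rewrite !inE; apply/negP => /andP[/andP[sVU _] /eqP cV].
by have := leq_trans (subset_leq_card sVU) cU; rewrite cV ltnn.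
Qed.

Lemma card_VofU k U : #|VofU k U| <= #|U| - k.
Proof.
move Hm : #|U| => m; elim: m U Hm => [|m IH] U cU;
  have [le|lt] := leqP #|U| k; try by rewrite VofU_small ?cards0.
  by rewrite cU in lt.
have [u0 u0U] : exists u0, u0 \in U by apply/card_gt0P; rewrite cU.
case: (arg_maxnP (fun i : 'I_n => nat_of_ord i) u0U) => u; rewrite -/(u \in U) => uU umax.
set T := [set V in VofU k U | u \in V].
have sub : VofU k U \subset VofU k (U :\ u) :|: T.
  apply/subsetP => V; rewrite !inE => /andP[cV kV]; case: (boolP (u \in V)) => uV.
    by rewrite cV kV orbT.
  by rewrite consecutive_setD1 ?kV.
have cT : #|T| <= 1.
  apply/card_le1_eqP => V V'; rewrite !inE.
  move=> /andP[/andP[cV /eqP kV] uV] /andP[/andP[cV' /eqP kV'] uV'].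
  exact: consecutive_top_uniq cV' cV (etrans kV' (esym kV)) uV' uV umax.
have cU' : #|U :\ u| = m by move: cU; rewrite (cardsD1 u U) uU add1n => [[]].
apply: leq_trans (subset_leq_card sub) _; apply: leq_trans (leq_card_setU _ _).1 _.
have := IH _ cU'; lia.
Qed.

End ConsecutiveSubsets.

Section NonInitialSubsets.
Variable n : nat.
Implicit Types U X Y : {set 'I_n}.

Definition noninitial_subsets (k : nat) U : {set {set 'I_n}} :=
  [set X : {set 'I_n} | [&& X \subset U, #|X| == k & ~~ initial U X]].

Lemma initial_uniq U X Y : X \subset U -> Y \subset U ->
  initial U X -> initial U Y -> #|X| = #|Y| -> X = Y.
Proof.
move=> sXU sYU iX iY cXY; apply/eqP; rewrite eqEcard cXY leqnn andbT.
apply/subsetP => e eX; apply: contraT => eY.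
have [g gY gX] : exists2 g, g \in Y & g \notin X.
  apply/subsetPn; apply: contra eY => sYX.
  suff -> : Y = X by [].
  by apply/eqP; rewrite eqEcard sYX cXY leqnn.
have mem_init Z a b : initial U Z -> a \in Z -> b \in U -> (b < a)%N -> b \in Z.
  move=> /forallP/(_ a)/implyP H aZ bU ba.
  by move/H: aZ => /forallP/(_ b)/implyP/(_ bU)/implyP; apply.
have [lt|lt|/val_inj eq] := ltngtP e g.
- by move: eY; rewrite (mem_init _ _ _ iY gY (subsetP sXU e eX) lt).
- by move: gX; rewrite (mem_init _ _ _ iX eX (subsetP sYU g gY) lt).
- by move: gX; rewrite -eq eX.
Qed.

Lemma card_noninitial_subsets k U : 'C(#|U|, k) <= #|noninitial_subsets k U| + 1.
Proof.
pose B := [set X : {set 'I_n} | [&& X \subset U, #|X| == k & initial U X]].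
have cB : #|B| <= 1.
  apply/card_le1_eqP => X Y; rewrite !inE => /and3P[sXU /eqP cX iX] /and3P[sYU /eqP cY iY].
  exact: initial_uniq sYU sXU iY iX (etrans cY (esym cX)).
rewrite -cards_draws; apply: leq_trans (leq_add (leqnn _) cB).
apply: leq_trans (leq_card_setU _ _).1; apply: subset_leq_card; apply/subsetP => X.
by rewrite !inE; case: (initial U X); rewrite ?andbT ?andbF ?orbF.
Qed.

End NonInitialSubsets.

Lemma bin_ge_n m k : 0 < k < m -> m <= 'C(m, k).
Proof.
move=> /andP[]; elim: m k => [|m IH] [|k] // _ lt.
have [e|ne] := eqVneq k.+1 m; first by rewrite -e binSn.
have lt2 : k.+1 < m by rewrite ltn_neqAle ne -ltnS lt.
rewrite binS; have := IH k.+1 isT lt2.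
have : 0 < 'C(m, k) by rewrite bin_gt0 ltnW // ltnW.
lia.
Qed.

Lemma bin_ge_mul_sub m k : 0 < k < m -> k * (m - k) + 1 <= 'C(m, k).
Proof.
move=> /andP[]; case: k => // k _; elim: m => [|m IH] // lt.
have [e|ne] := eqVneq k.+1 m; first by subst m; rewrite binSn subSnn muln1 addn1.
have lt2 : k.+1 < m by rewrite ltn_neqAle ne -ltnS lt.
have := IH lt2; rewrite binS subSn ?(ltnW lt2) // mulnS.
have : k.+1 <= 'C(m, k).
  case: k {lt ne IH} lt2 => [|k] lt2; first by rewrite bin0.
  by apply: leq_trans (ltnW lt2) (bin_ge_n _); lia.
lia.
Qed.

Lemma bin_ge_mulS_sub m k : 1 < k < m -> k.+1 * (m - k) <= 'C(m, k).
Proof.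
move=> /andP[]; case: k => // k k1; elim: m => [|m IH] // lt.
have [e|ne] := eqVneq k.+1 m; first by subst m; rewrite binSn subSnn muln1.
have lt2 : k.+1 < m by rewrite ltn_neqAle ne -ltnS lt.
have := IH lt2; rewrite binS subSn ?(ltnW lt2) // mulnS.
have : k.+2 <= 'C(m, k) by apply: leq_trans lt2 (bin_ge_n _); lia.
lia.
Qed.

Lemma leq_card_bigcup (I T : finType) (P : pred I) (F : I -> {set T}) :
  #|\bigcup_(i | P i) F i| <= \sum_(i | P i) #|F i|.
Proof.
elim/big_rec2: _ => [|i A s _ IH]; first by rewrite cards0.
by apply: leq_trans (leq_card_setU _ _).1 _; rewrite leq_add2l.
Qed.

Lemma card_bigcup_disjoint (I T : finType) (P : pred I) (F : I -> {set T}) :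
  (forall i j, P i -> P j -> i != j -> [disjoint F i & F j]) ->
  #|\bigcup_(i | P i) F i| = \sum_(i | P i) #|F i|.
Proof.
move=> dis; pose F' i := if P i then F i else set0.
rewrite (big_mkcond P) -/(\bigcup_i F' i) /= -sum1_card partition_disjoint_bigcup.
  rewrite [RHS]big_mkcond; apply: eq_bigr => i _.
  by rewrite /F' sum1_card; case: (P i); rewrite ?cards0.
move=> i j ne; rewrite /F' -setI_eq0.
by case Pi: (P i); case Pj: (P j); rewrite ?set0I ?setI0 // setI_eq0 dis.
Qed.

Lemma ler_nat_div (a b c d : nat) : 0 < b -> 0 < d -> a * d <= c * b ->
  (a%:R / b%:R <= c%:R / d%:R :> rat)%R.
Proof.
move=> b0 d0 h.
by rewrite ler_pdivrMr ?ltr0n // mulrAC ler_pdivlMr ?ltr0n // -!natrM ler_nat.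
Qed.

Section LYM.
Variable n : nat.
Implicit Types X Y : {set 'I_n}.

Lemma card_supsets Y j : #|Y| = j -> j < n ->
  #|[set X : {set 'I_n} | Y \subset X & #|X| == j.+1]| = n - j.
Proof.
move=> cY ltjn; have cC (Z : {set 'I_n}) : #|~: Z| = n - #|Z|.
  by have := cardsC Z; rewrite card_ord; lia.
have -> : [set X : {set 'I_n} | Y \subset X & #|X| == j.+1] =
          (@setC _) @: [set Z : {set 'I_n} | Z \subset ~: Y & #|Z| == n - j.+1].
  apply/setP => X; rewrite inE; apply/andP/imsetP => [[sYX /eqP cX]|[Z]].
    by exists (~: X); rewrite ?setCK // inE setCS sYX cC cX eqxx.
  rewrite inE => /andP[sZ /eqP cZ] ->; split; first by rewrite -setCS setCK.
  by have := cardsC Z; rewrite card_ord cZ; lia.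
rewrite card_imset; last exact: setC_inj.
by rewrite cards_draws cC cY subnS -subn1 bin_sub ?bin1 // subn_gt0.
Qed.

(* Double counting of the pairs Y \subset X with X \in B, Y \in C. *)
Lemma card_shadow_ge j (B C : {set {set 'I_n}}) :
  (forall X, X \in B -> #|X| = j.+1) ->
  (forall X Y, X \in B -> Y \subset X -> #|Y| = j -> Y \in C) ->
  (forall Y, Y \in C -> #|Y| = j) ->
  #|B| * j.+1 <= #|C| * (n - j).
Proof.
move=> hB hBC hC; have [->|[X0 X0B]] := set_0Vmem B; first by rewrite cards0.
have ltjn : j < n by have := max_card (mem X0); rewrite card_ord hB.
have -> : #|B| * j.+1 = \sum_(X in B) \sum_(Y in C) (Y \subset X : nat).
  rewrite -sum_nat_const; apply: eq_bigr => X XB.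
  rewrite -big_mkcondr /= sum1_card -(binSn j) -(hB X XB) -cards_draws.
  apply: eq_card => Y; rewrite !inE.
  apply/andP/andP => [[sYX /eqP cY]|[YC sYX]]; last by rewrite sYX hC.
  by split => //; apply: hBC XB sYX cY.
rewrite exchange_big /= -sum_nat_const; apply: leq_sum => Y YC.
rewrite -big_mkcondr /= sum1_card -(card_supsets (hC Y YC) ltjn).
apply: subset_leq_card; apply/subsetP => X; rewrite !inE => /andP[XB sYX].
by rewrite sYX (hB X XB) eqxx.
Qed.

Variables (m : nat) (A : {set {set 'I_n}}).
Hypothesis mn : m <= n.
Hypothesis A_antichain : forall X Y, X \in A -> Y \in A -> X \subset Y -> X = Y.

Let layer j := [set X in A | #|X| == j].
Let shadow j := [set Y : {set 'I_n} | (#|Y| == j) && [exists X in A, Y \subset X]].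
Let ratio (j k : nat) : rat := (j%:R / ('C(n, k))%:R)%R.

Let bin_gt0_m j : j <= m -> 0 < 'C(n, j).
Proof. by move=> jm; rewrite bin_gt0 (leq_trans jm). Qed.

Let layer_sub_shadow j : layer j \subset shadow j.
Proof.
apply/subsetP => X; rewrite !inE => /andP[XA ->] /=.
by apply/existsP; exists X; rewrite XA subxx.
Qed.

Lemma shadow_ratio_step j : 0 < j < m ->
  (ratio #|shadow j.+1| j.+1 <= ratio #|shadow j :\: layer j| j)%R.
Proof.
move=> /andP[j0 jm].
have ll : #|shadow j.+1| * j.+1 <= #|shadow j :\: layer j| * (n - j).
  apply: card_shadow_ge.
  - by move=> X; rewrite inE => /andP[/eqP].
  - move=> X Y; rewrite inE => /andP[/eqP cX /existsP[Z /andP[ZA sXZ]]] sYX cY.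
    rewrite !inE cY eqxx /=; apply/andP; split; last first.
      by apply/existsP; exists Z; rewrite ZA (subset_trans sYX sXZ).
    apply/negP => /andP[YA _].
    have := subset_leq_card sXZ.
    by rewrite -(A_antichain YA ZA (subset_trans sYX sXZ)) cX cY ltnn.
  - by move=> Y; rewrite !inE => /andP[_ /andP[/eqP]].
apply: ler_nat_div; [exact: bin_gt0_m | exact: bin_gt0_m (ltnW jm) |].
have nj : 0 < n - j by rewrite subn_gt0 (leq_trans jm).
rewrite -(leq_pmul2r nj) -mulnA [_ * (n - j)]mulnC -mul_bin_left mulnA.
by rewrite !(mulnAC _ 'C(n, j.+1)) leq_mul2r ll orbT.
Qed.

Lemma lym_tail j : 0 < j <= m ->
  (\sum_(j <= i < m.+1) ratio #|layer i| i <= ratio #|shadow j| j)%R.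
Proof.
move Hd : (m - j) => d; elim: d j Hd => [|d IH] j Hd /andP[j0 jm].
  have -> : j = m by lia.
  rewrite big_ltn // big_geq // addr0.
  apply: ler_nat_div; [exact: bin_gt0_m | exact: bin_gt0_m |].
  by rewrite leq_mul2r subset_leq_card ?orbT.
have jm' : j < m by lia.
rewrite big_ltn //; apply: le_trans (lerD (lexx _) (IH j.+1 _ _)) _; try lia.
apply: le_trans (lerD (lexx _) (shadow_ratio_step _)) _; first by rewrite j0.
rewrite -mulrDl -natrD -(cardsID (layer j) (shadow j)) (setIidPr (layer_sub_shadow j)).
by rewrite setDE.
Qed.

Theorem lym :
  (\sum_(1 <= j < m.+1) (#|[set X in A | #|X| == j]|%:R / ('C(n, j))%:R) <= 1 :> rat)%R.
Proof.
have [->|m0] := posnP m; first by rewrite big_geq.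
apply: le_trans (lym_tail _) _; first by rewrite m0.
have c1 : #|shadow 1| <= 'C(n, 1).
  rewrite -[X in 'C(X, 1)]card_ord -card_draws; apply: subset_leq_card.
  by apply/subsetP => Y; rewrite !inE => /andP[].
by rewrite ler_pdivrMr ?ltr0n ?bin_gt0_m // mul1r ler_nat.
Qed.

End LYM.

Section Levels.
Variables (n r : nat) (M : matroid n).
Hypothesis r3 : 3 <= r.
Implicit Types F U X Y : {set 'I_n}.
Local Notation rk := (mrank M).

Definition level_weight (k : nat) := if k == r.-1 then k.+1 else k.

Definition level_subsets (k : nat) U : {set {set 'I_n}} :=
  if k == r.-1 then [set X : {set 'I_n} | X \subset U & #|X| == k]
  else noninitial_subsets k U.

Definition level (k : nat) : {set {set 'I_n}} :=
  if k == 0 then V_k M 0 else \bigcup_(U in Ustar_k M k) level_subsets k U.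

Lemma mem_Ustar_k k U : U \in Ustar_k M k ->
  exists F, [/\ flat M F, rk F = k, is_Ustar M F U & k < #|U|].
Proof. by rewrite inE => /andP[/existsP[F /and3P[fF /eqP rF hU]] kU]; exists F. Qed.

Lemma mem_level0 X : X \in level 0 ->
  exists F U, [/\ is_Ustar M F U, rk F = 0, X \subset U & #|X| = 1].
Proof.
rewrite /level eqxx => /bigcupP[U /mem_Ustar_k[F [_ rF hU _]]].
by rewrite inE => /andP[/andP[sXU _] /eqP cX]; exists F, U.
Qed.

Lemma mem_level k X : 0 < k -> X \in level k ->
  exists F U, [/\ flat M F, is_Ustar M F U, rk F = k, X \subset U & #|X| = k] /\
    (k != r.-1 -> ~~ initial U X).
Proof.
move=> k0; rewrite /level (negbTE (lt0n_neq0 k0)) => /bigcupP[U /mem_Ustar_k[F [fF rF hU _]]].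
rewrite /level_subsets; case: eqP => _; rewrite inE.
  by case/andP => sXU /eqP cX; exists F, U.
by case/and3P => sXU /eqP cX iX; exists F, U.
Qed.

Lemma card_mem_level k X : X \in level k -> #|X| = maxn k 1.
Proof.
case: (posnP k) => [->|k0]; first by case/mem_level0 => F [U [_ _ _ ->]].
by case/(mem_level k0) => F [U [[_ _ _ _ ->] _]]; rewrite (maxn_idPl k0).
Qed.

Lemma level0_not_sub k X Y : 0 < k -> X \in level 0 -> Y \in level k -> X \subset Y -> False.
Proof.
move=> k0 /mem_level0[F [U [hU rF sXU cX]]] /(mem_level k0)[F' [U' [[_ hU' rF' sYU' cY] _]]] sXY.
have iX : indep M X.
  by apply: Ustar_indep hU' (subset_trans sXY sYU') _; rewrite cX rF'.
by move: cX; rewrite (Ustar0_indep hU rF sXU iX) cards0.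
Qed.

Lemma level_antichain X Y k l : l < r ->
  X \in level k -> Y \in level l -> X \subset Y -> X = Y.
Proof.
move=> lr Xk Yl sXY; apply/eqP; rewrite eqEcard sXY /= leqNgt; apply/negP => ltXY.
have cX := card_mem_level Xk; have cY := card_mem_level Yl.
have l0 : 0 < l by move: ltXY; rewrite cX cY; lia.
have [F' [U' [[_ hU' rF' sYU' _] _]]] := mem_level l0 Yl.
case: (posnP k) => [k0|k0]; first by rewrite k0 in Xk; exact: level0_not_sub l0 Xk Yl sXY.
have [F [U [[_ hU rF sXU cXk] nonini]]] := mem_level k0 Xk.
have kl : k < l by move: ltXY; rewrite cXk cY (maxn_idPl l0).
have := Ustar_initial hU hU' (_ : rk F < rk F') sXU _ (subset_trans sXY sYU').
rewrite rF rF' cXk => /(_ kl erefl); apply/negP/nonini; lia.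
Qed.

Lemma level_subsets_sub k U X : X \in level_subsets k U -> X \subset U /\ #|X| = k.
Proof.
by rewrite /level_subsets; case: eqP => _; rewrite inE; [case/andP | case/and3P] => ? /eqP.
Qed.

Lemma disjoint_level_subsets k U U' : 0 < k -> U \in Ustar_k M k -> U' \in Ustar_k M k ->
  U != U' -> [disjoint level_subsets k U & level_subsets k U'].
Proof.
move=> k0 /mem_Ustar_k[F [fF rF hU _]] /mem_Ustar_k[F' [fF' rF' hU' _]] ne.
apply/pred0P => X /=; apply: contraNF ne => /andP[/level_subsets_sub[sXU cX]].
case/level_subsets_sub => sXU' _; apply/eqP.
by apply: Ustar_eq fF fF' hU hU' _ sXU sXU' _; rewrite ?rF ?rF'.
Qed.

Lemma card_level_subsets k U : 0 < k < r -> k < #|U| ->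
  level_weight k * (#|U| - k) <= #|level_subsets k U|.
Proof.
move=> /andP[k0 kr] kU; rewrite /level_weight /level_subsets; case: eqP => [ek|_].
  by rewrite cards_draws bin_ge_mulS_sub // kU andbT ek; lia.
by have := card_noninitial_subsets k U; have := bin_ge_mul_sub (_ : 0 < k < #|U|); lia.
Qed.

Lemma card_level_ge k : 0 < k < r -> level_weight k * #|V_k M k| <= #|level k|.
Proof.
move=> /andP[k0 kr].
have cV : #|V_k M k| <= \sum_(U in Ustar_k M k) (#|U| - k).
  apply: leq_trans (leq_card_bigcup _ _) _; apply: leq_sum => U _; exact: card_VofU.
rewrite /level (negbTE (lt0n_neq0 k0)) [X in _ <= X]card_bigcup_disjoint; last first.
  by move=> U U'; exact: disjoint_level_subsets k0.
apply: leq_trans (leq_mul (leqnn _) cV) _.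
rewrite big_distrr /=; apply: leq_sum => U /mem_Ustar_k[F [_ _ _ kU]].
by apply: card_level_subsets; rewrite ?k0.
Qed.

End Levels.

Section Weights.
Variables (n r : nat) (M : matroid n).
Hypotheses (r3 : 3 <= r) (rn : r <= n).

Let levels := \bigcup_(k < r) level r M k.
Let layer j := [set X in levels | #|X| == j].

Let bin_gt0_r k : k < r -> 0 < 'C(n, k).
Proof. by move=> kr; rewrite bin_gt0 (leq_trans (ltnW kr)). Qed.

Lemma level_sub_layer k : k < r -> level r M k \subset layer (maxn k 1).
Proof.
move=> kr; apply/subsetP => X Xk; rewrite inE (card_mem_level Xk) eqxx andbT.
by apply/bigcupP; exists (Ordinal kr).
Qed.

Lemma levels_antichain X Y : X \in levels -> Y \in levels -> X \subset Y -> X = Y.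
Proof. by move=> /bigcupP[k _ Xk] /bigcupP[l _ Yl]; exact: level_antichain Xk Yl. Qed.

Lemma ck_level k : 0 < k < r -> ck n r k = ((level_weight r k)%:R / ('C(n, k))%:R)%R.
Proof.
rewrite /ck /level_weight => /andP[k0 kr]; case: eqP => [->|_].
  by rewrite prednK ?(ltn_trans _ kr).
by rewrite (negbTE (lt0n_neq0 k0)).
Qed.

Lemma ratio_level_le k : 0 < k < r ->
  ((#|V_k M k|)%:R * ck n r k <= (#|layer k|)%:R / ('C(n, k))%:R)%R.
Proof.
move=> /andP[k0 kr]; rewrite ck_level ?k0 // mulrA -natrM mulnC.
apply: ler_nat_div; rewrite ?bin_gt0_r // leq_mul2r; apply/orP; right.
apply: leq_trans (card_level_ge M r3 _) _; first by rewrite k0.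
by rewrite subset_leq_card // -{2}(maxn_idPl k0) level_sub_layer.
Qed.

Lemma card_level01_le : #|V_k M 0| + level_weight r 1 * #|V_k M 1| <= #|layer 1|.
Proof.
have d01 : [disjoint level r M 0 & level r M 1].
  apply/pred0P => X /=; apply/negbTE/negP => /andP[X0 X1].
  exact: level0_not_sub (ltnSn 0) X0 X1 (subxx X).
have sub : level r M 0 :|: level r M 1 \subset layer 1.
  by rewrite subUset (level_sub_layer (ltn_trans _ r3)) // (level_sub_layer (ltnW r3)).
apply: leq_trans (subset_leq_card sub).
have r1 : 0 < 1 < r by rewrite (ltn_trans _ r3).
by rewrite cardsU (disjoint_setI0 d01) cards0 subn0 leq_add ?(card_level_ge M r3 r1).
Qed.

Lemma ratio_level01_le :
  ((#|V_k M 0|)%:R * ck n r 0 + (#|V_k M 1|)%:R * ck n r 1 <= (#|layer 1|)%:R / ('C(n, 1))%:R)%R.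
Proof.
have -> : ck n r 0 = (1 / ('C(n, 1))%:R)%R.
  by rewrite /ck bin1; case: eqP => // r1; lia.
rewrite ck_level ?(ltn_trans _ r3) // !mulrA mulr1 -mulrDl -natrM -natrD mulnC.
by apply: ler_nat_div; rewrite ?bin_gt0_r ?(ltn_trans _ r3) // leq_mul2r card_level01_le orbT.
Qed.

Lemma sum_ck_le1 : (\sum_(k < r) (#|V_k M k|)%:R * ck n r k <= 1 :> rat)%R.
Proof.
have r0 : 0 < r by rewrite (ltn_trans _ r3).
apply: le_trans (lym (m := r.-1) (leq_trans (leq_pred r) rn) levels_antichain).
rewrite prednK // -(big_mkord xpredT (fun k => (#|V_k M k|)%:R * ck n r k)%R).
rewrite big_ltn // big_ltn ?(ltn_trans _ r3) // [X in (_ <= X)%R]big_ltn ?(ltn_trans _ r3) //.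
rewrite addrA lerD ?ratio_level01_le //; apply: ler_sum_nat => k /andP[k2 kr].
by apply: ratio_level_le; rewrite kr (ltn_trans _ k2).
Qed.

End Weights.

Theorem lemma5p10 (n r : nat) (M : matroid n) :
  3 <= r -> 2 * r <= n -> mrank M setT = r ->
  (\sum_(k < r) (#|V_k M k|)%:R * ck n r k <= (1 : rat))%R.
Proof.
move=> r3 _ rT; apply: sum_ck_le1 r3 _.
by rewrite -rT; apply: leq_trans (mrank_leq_card M setT) _; rewrite cardsT card_ord.
Qed.
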